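(* For all $n\in\mathbb N$ and all integers $d\geq 1$, $$\sum_{k=0}^nU_{d-1}\circ T_{(d+1)^k}\prod_{j=0}^k\frac{1}{U_d\circ T_{(d+1)^j}}=\frac{U_{(d+1)^{n+1}-2}}{U_{(d+1)^{n+1}-1}}$$ as rational fractions in $x$.
   Context: $T_n=T_n(x)$ and $U_n=U_n(x)$ denote the Chebyshev polynomials of the first and second kind, defined by $T_0=1$, $T_1=x$, $T_{n+1}=2xT_n-T_{n-1}$ and $U_0=1$, $U_1=2x$, $U_{n+1}=2xU_n-U_{n-1}$ for $n\geq1$. The symbol $\circ$ denotes composition of polynomials. *)

From HB Require Import structures.
From mathcomp Require Import all_boot all_order all_algebra.
From mathcomp Require Import fraction.
Set Implicit Arguments. Unset Strict Implicit. Unset Printing Implicit Defensive.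
Import GRing.Theory.
Local Open Scope ring_scope.

Fixpoint chebT_pair (n : nat) : {poly rat} * {poly rat} :=
  match n with
  | 0%N => (1, 'X)
  | n'.+1 => let: (a, b) := chebT_pair n' in (b, 2%:P * 'X * b - a)
  end.
Definition chebT (n : nat) : {poly rat} := (chebT_pair n).1.

Fixpoint chebU_pair (n : nat) : {poly rat} * {poly rat} :=
  match n with
  | 0%N => (1, 2%:P * 'X)
  | n'.+1 => let: (a, b) := chebU_pair n' in (b, 2%:P * 'X * b - a)
  end.
Definition chebU (n : nat) : {poly rat} := (chebU_pair n).1.

Notation ratfrac := {fraction {poly rat}}.
Definition toF (p : {poly rat}) : ratfrac := FracField.tofrac p.

From HB Require Import structures.
From mathcomp Require Import all_boot all_order all_algebra.
From mathcomp Require Import fraction ring zify.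
Import GRing.Theory Num.Theory.
Local Open Scope ring_scope.

(** Write S_n for U_(n-1), with S_0 = 0. Then S_(ab) = (S_a o T_b) S_b, so the
    product of the S_(d+1) o T_((d+1)^j), j <= k, telescopes to S_((d+1)^(k+1)).
    By the Cassini-type identity S_(M+K-1) S_M - S_(M-1) S_(M+K) = S_K applied
    with K = dM, the k-th summand equals r((d+1)^(k+1)) - r((d+1)^k), where
    r(M) = S_(M-1)/S_M, and the sum telescopes since r(1) = 0. *)

Lemma nat_ind2 (P : nat -> Prop) :
  P 0%N -> P 1%N -> (forall n, P n -> P n.+1 -> P n.+2) -> forall n, P n.
Proof.
move=> P0 P1 PSS n; suff: P n /\ P n.+1 by case.
by elim: n => [|n [Pn PSn]]; split => //; apply: PSS.
Qed.

Lemma chebT_pairE n : chebT_pair n = (chebT n, chebT n.+1).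
Proof. by elim: n => [|n IHn] //=; rewrite /chebT /= IHn. Qed.

Lemma chebT0 : chebT 0 = 1. Proof. by []. Qed.
Lemma chebT1 : chebT 1 = 'X. Proof. by []. Qed.

Lemma chebTSS n : chebT n.+2 = 2 * 'X * chebT n.+1 - chebT n.
Proof. by rewrite {1}/chebT /= chebT_pairE polyC_natr. Qed.

Lemma chebU_pairE n : chebU_pair n = (chebU n, chebU n.+1).
Proof. by elim: n => [|n IHn] //=; rewrite /chebU /= IHn. Qed.

Lemma chebUSS n : chebU n.+2 = 2 * 'X * chebU n.+1 - chebU n.
Proof. by rewrite {1}/chebU /= chebU_pairE polyC_natr. Qed.

Definition chebS (n : nat) : {poly rat} := if n is n'.+1 then chebU n' else 0.

Lemma chebS0 : chebS 0 = 0. Proof. by []. Qed.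
Lemma chebS1 : chebS 1 = 1. Proof. by []. Qed.

Lemma chebSSS n : chebS n.+2 = 2 * 'X * chebS n.+1 - chebS n.
Proof.
case: n => [|n]; last exact: chebUSS.
by rewrite /chebS /chebU /= polyC_natr mulr1 subr0.
Qed.

Lemma chebS_at1 n : (chebS n).[1] = n%:R.
Proof.
elim/nat_ind2: n => [|| n IH0 IH1]; first by rewrite horner0.
  by rewrite chebS1 hornerC.
rewrite chebSSS hornerD hornerN !hornerM hornerX IH0 IH1 -polyC_natr hornerC.
by rewrite mulr1 -!natrM -natrB; [congr _%:R|]; lia.
Qed.

Lemma chebS_eq0 n : (chebS n == 0) = (n == 0%N).
Proof.
apply/eqP/eqP => [Sn0|->]; last exact: chebS0.
by move: (chebS_at1 n); rewrite Sn0 horner0 => /esym/eqP; rewrite pnatr_eq0 => /eqP.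
Qed.

Lemma chebT_chebS_mul b e :
  2 * chebT b * chebS (e + b) = chebS (e + 2 * b) + chebS e.
Proof.
elim/nat_ind2: b e => [e|e|b IH0 IH1 e].
- by rewrite chebT0 !addn0; ring.
- by rewrite chebT1 addn1 muln1 addn2 chebSSS; ring.
have {IH1} := IH1 e.+1; have {IH0} := IH0 e.+2.
have -> : (e.+2 + b = e + b.+2)%N by lia.
have -> : (e.+1 + b.+1 = e + b.+2)%N by lia.
have -> : (e.+2 + 2 * b = (e + 2 * b).+2)%N by lia.
have -> : (e.+1 + 2 * b.+1 = (e + 2 * b).+3)%N by lia.
have -> : (e + 2 * b.+2 = (e + 2 * b).+4)%N by lia.
rewrite chebTSS !(chebSSS (e + 2 * b).+2) (chebSSS e) => IH0 IH1.
have -> : 2 * (2 * 'X * chebT b.+1 - chebT b) * chebS (e + b.+2) =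
    2 * 'X * (2 * chebT b.+1 * chebS (e + b.+2)) - 2 * chebT b * chebS (e + b.+2).
  by ring.
by rewrite IH0 IH1; ring.
Qed.

Lemma chebS_mul a b : chebS (a * b) = (chebS a \Po chebT b) * chebS b.
Proof.
elim/nat_ind2: a => [|| a IH0 IH1].
- by rewrite mul0n chebS0 comp_poly0 mul0r.
- by rewrite mul1n chebS1 comp_polyC mul1r.
have := chebT_chebS_mul b (a * b).
have -> : (a * b + b = a.+1 * b)%N by rewrite mulSn addnC.
have -> : (a * b + 2 * b = a.+2 * b)%N by rewrite !mulSn; lia.
move=> rec; have -> : chebS (a.+2 * b) =
    2 * chebT b * chebS (a.+1 * b) - chebS (a * b) by rewrite rec; ring.
rewrite chebSSS comp_polyB !comp_polyM comp_polyX -polyC_natr comp_polyC.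
by rewrite polyC_natr IH0 IH1; ring.
Qed.

Lemma chebS_expn m k :
  chebS (m ^ k) = \prod_(j < k) (chebS m \Po chebT (m ^ j)).
Proof.
elim: k => [|k IHk]; first by rewrite big_ord0.
by rewrite big_ord_recr -IHk expnS chebS_mul mulrC.
Qed.

Lemma chebS_cassini q k :
  chebS (q + k) * chebS q.+1 - chebS q * chebS (q + k).+1 = chebS k.
Proof.
elim: q => [|q IHq]; first by rewrite chebS0 chebS1 add0n; ring.
by rewrite -IHq addSn !chebSSS; ring.
Qed.

Definition chebS_ratio (M : nat) : ratfrac := toF (chebS M.-1) / toF (chebS M).

Lemma chebS_ratio1 : chebS_ratio 1 = 0.
Proof. by rewrite /chebS_ratio chebS0 /toF rmorph0 mul0r. Qed.

Lemma chebS_ratio_mulSn d M : (0 < M)%N ->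
  toF (chebS d \Po chebT M) / toF (chebS (d.+1 * M))
  = chebS_ratio (d.+1 * M) - chebS_ratio M.
Proof.
move=> M_gt0; rewrite /chebS_ratio /toF.
have S_neq0 N : (0 < N)%N -> tofrac (chebS N) != 0.
  by move=> N_gt0; rewrite tofrac_eq0 chebS_eq0 -lt0n.
have SM_neq0 := S_neq0 _ M_gt0.
have SdM_neq0 : tofrac (chebS (d.+1 * M)) != 0 by apply: S_neq0; rewrite muln_gt0.
have := chebS_cassini M.-1 (d * M).
rewrite prednK // (_ : (M.-1 + d * M = (d.+1 * M).-1)%N); last by rewrite mulSn; lia.
rewrite prednK ?muln_gt0 // (chebS_mul d M) => /(congr1 toF).
rewrite /toF !rmorphB !rmorphM /= => cassini.
move: cassini SM_neq0 SdM_neq0.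
move: (tofrac _) (tofrac _) (tofrac _) (tofrac (chebS M)) (tofrac (chebS _)).
move=> c t p s f cassini s_neq0 t_neq0.
by rewrite -(mulfK s_neq0 c) -cassini !mulrBl (mulfK s_neq0) mulrAC (mulfK t_neq0).
Qed.

Lemma sum_chebS_ratio d n :
  \sum_(k < n) toF (chebS d \Po chebT (d.+1 ^ k)) / toF (chebS (d.+1 ^ k.+1))
  = chebS_ratio (d.+1 ^ n).
Proof.
rewrite -(big_mkord xpredT (fun k =>
  toF (chebS d \Po chebT (d.+1 ^ k)) / toF (chebS (d.+1 ^ k.+1)))).
rewrite (telescope_sumr_eq (fun k => chebS_ratio (d.+1 ^ k))) //.
  by rewrite expn0 chebS_ratio1 subr0.
by move=> k _; rewrite expnS chebS_ratio_mulSn // expn_gt0.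
Qed.

Theorem theorem1p3 (n d : nat) (hd : (1 <= d)%N) :
  \sum_(k < n.+1)
     (toF (chebU d.-1 \Po chebT ((d.+1) ^ k)) *
      \prod_(j < k.+1) (toF (chebU d \Po chebT ((d.+1) ^ j)))^-1)
  = toF (chebU ((d.+1) ^ n.+1 - 2)) / toF (chebU ((d.+1) ^ n.+1 - 1)).
Proof.
have chebUE m : chebU m = chebS m.+1 by [].
have N_ge2 : (2 <= d.+1 ^ n.+1)%N.
  by rewrite (leq_trans _ (leq_pexp2l _ (ltn0Sn n))) ?expn1 ?ltnS.
rewrite !chebUE (_ : (d.+1 ^ n.+1 - 2).+1 = (d.+1 ^ n.+1).-1)%N; last by lia.
rewrite (_ : (d.+1 ^ n.+1 - 1).+1 = d.+1 ^ n.+1)%N; last by lia.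
rewrite -/(chebS_ratio _) -sum_chebS_ratio; apply: eq_bigr => k _.
rewrite prednK // prodfV /toF -rmorph_prod chebS_expn.
by congr (_ * (tofrac _)^-1); apply: eq_bigr => j _.
Qed.
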